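(* Let $\Gamma$ be a temporal theory and $M$ a total THT model, and let $\mathrm{Th}(M):=\{\varphi\mid M,(0,0)\models\varphi\}$. The following are equivalent: (1) $M$ is a temporal equilibrium model of $\Gamma$; (2) for every temporal formula $\varphi$: $\Gamma\cup\{\neg\psi\mid\psi\notin\mathrm{Th}(M)\}\models_{\mathrm{THT}}\varphi$ iff $\varphi\in\mathrm{Th}(M)$.
   Context: Fix a countable set $\mathbb{P}$ of atoms. Temporal formulas: $\varphi ::= p\mid\bot\mid\varphi\wedge\varphi\mid\varphi\vee\varphi\mid\varphi\to\varphi\mid\circ\varphi\mid\varphi\,\mathsf{U}\,\varphi\mid\varphi\,\mathsf{R}\,\varphi$; $\neg\varphi:=\varphi\to\bot$. The THT frame is $W=\mathbb{N}\times\{0,1\}$, $(i,h)\preccurlyeq(j,t)$ iff $i=j$ and $h\le t$, $S((i,k))=(i+1,k)$. A THT model is $((W,\preccurlyeq,S),V)$ with $V:W\to2^{\mathbb{P}}$ and $V((i,0))\subseteq V((i,1))$. Satisfaction: $M,w\models p$ iff $p\in V(w)$; $\bot$ never; $\wedge,\vee$ pointwise; $M,w\models\varphi\to\psi$ iff for all $v\succcurlyeq w$, $M,v\models\varphi$ implies $M,v\models\psi$; $M,w\models\circ\varphi$ iff $M,S(w)\models\varphi$; $\varphi\,\mathsf{U}\,\psi$: some $k\ge0$ with $M,S^k(w)\models\psi$ and $M,S^i(w)\models\varphi$ for all $0\le i<k$; $\varphi\,\mathsf{R}\,\psi$: for all $k\ge0$, $M,S^k(w)\models\psi$ or $M,S^i(w)\models\varphi$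 for some $0\le i<k$. $M$ is total if $V((i,0))=V((i,1))$ for all $i$. $M'\le M$ iff $V'((i,1))=V((i,1))$ and $V'((i,0))\subseteq V((i,0))$ for all $i$; $M'<M$ iff $M'\le M$ and $V'\ne V$. A temporal equilibrium model of $\Gamma$ is a total THT model $M$ with $M,(0,0)\models\Gamma$ such that no THT model $M'<M$ has $M',(0,0)\models\Gamma$. $\Gamma\models_{\mathrm{THT}}\varphi$ means every THT model and world satisfying all formulas of $\Gamma$ satisfies $\varphi$. *)

From mathcomp Require Import ssreflect ssrfun ssrbool eqtype ssrnat choice.
Set Implicit Arguments.
Unset Strict Implicit.
Unset Printing Implicit Defensive.

Section THT.
Variable P : countType.

Inductive formula : Type :=
| Atom of P
| Bot
| And of formula & formula
| Or of formula & formula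
| Impl of formula & formula
| Next of formula
| Until of formula & formula
| Release of formula & formula.

Definition Neg (phi : formula) : formula := Impl phi Bot.

(* A valuation: V i h is the set of atoms true at world (i,h),
   with h = false standing for 0 ("here") and h = true for 1 ("there"). *)
Definition valuation := nat -> bool -> P -> Prop.

Definition is_THT (V : valuation) : Prop :=
  forall i p, V i false p -> V i true p.

Definition hle (h t : bool) : Prop := h = true -> t = true.

Fixpoint sat (V : valuation) (i : nat) (h : bool) (phi : formula) : Prop :=
  match phi with
  | Atom p => V i h p
  | Bot => False
  | And a b => sat V i h a /\ sat V i h b
  | Or a b => sat V i h a \/ sat V i h b
  | Impl a b => forall t, hle h t -> sat V i t a -> sat V i t b
  | Next a => sat V i.+1 h a
  | Until a b => exists k, sat V (i + k) h b /\ (forall j, j < k -> sat V (i + j) h a)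
  | Release a b => forall k, sat V (i + k) h b \/ (exists j, j < k /\ sat V (i + j) h a)
  end.

Definition theory := formula -> Prop.

Definition sat_theory (V : valuation) i h (G : theory) : Prop :=
  forall g, G g -> sat V i h g.

Definition total_model (V : valuation) : Prop :=
  forall i p, V i false p <-> V i true p.

Definition leM (V' V : valuation) : Prop :=
  (forall i p, V' i true p <-> V i true p) /\
  (forall i p, V' i false p -> V i false p).

Definition ltM (V' V : valuation) : Prop :=
  leM V' V /\ ~ (forall i h p, V' i h p <-> V i h p).

Definition temporal_equilibrium (G : theory) (V : valuation) : Prop :=
  is_THT V /\ total_model V /\ sat_theory V 0 false G /\
  ~ (exists V', is_THT V' /\ ltM V' V /\ sat_theory V' 0 false G).

Definition tht_entails (G : theory) (phi : formula) : Prop :=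
  forall V, is_THT V -> forall i h, sat_theory V i h G -> sat V i h phi.

Definition Th (V : valuation) : theory := fun phi => sat V 0 false phi.

Definition extend_neg (G : theory) (V : valuation) : theory :=
  fun chi => G chi \/ exists psi, ~ Th V psi /\ chi = Neg psi.

End THT.

(* The "there" component of any model of Γ ∪ {¬ψ | ψ ∉ Th(M)} is pinned down
   by the formulas ¬○ⁿp and ¬¬○ⁿp: it must be that of M.  At a "there" world
   such a model therefore satisfies exactly what M does, and at a "here"
   world (after shifting it to time 0) it is below M, so either it coincides
   with M or it is a strictly smaller model of Γ; equilibrium rules out the
   latter, which gives (1) ⇒ (2).  Conversely, under (2) Γ holds in M, and any
   smaller model M' of Γ satisfies the negations, so by (2) it satisfies
   every ○ⁿp true in M: M' = M. *)

From Stdlib Require Import Classical.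
From mathcomp Require Import ssreflect ssrfun ssrbool eqtype ssrnat choice.

Set Implicit Arguments.
Unset Strict Implicit.
Unset Printing Implicit Defensive.

Section TemporalEquilibrium.
Variable P : countType.
Implicit Types (V W : valuation P) (G : theory P) (phi : formula P).

Definition same_there V W : Prop := forall i p, V i true p <-> W i true p.

Definition shift V (i : nat) : valuation P := fun k => V (i + k).

Definition nexts (n : nat) (p : P) : formula P := iter n (@Next P) (Atom p).

Lemma hle_trans (h s t : bool) : hle h s -> hle s t -> hle h t.
Proof. by move=> hs st /hs /st. Qed.

Lemma hle_true {h : bool} : hle h true.
Proof. by []. Qed.

Lemma sat_agree V W phi i h :
  (forall j t p, hle h t -> (V j t p <-> W j t p)) ->
  sat V i h phi <-> sat W i h phi.
Proof.
elim: phi i h => [p| |a IHa b IHb|a IHa b IHb|a IHa b IHb|a IHa|a IHa b IHb|a IHa b IHb]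
  i h E /=.
- exact: E.
- done.
- by rewrite (IHa i h E) (IHb i h E).
- by rewrite (IHa i h E) (IHb i h E).
- have E' t : hle h t -> forall j s p, hle t s -> (V j s p <-> W j s p).
    by move=> ht j s p ts; apply: E; apply: hle_trans ht ts.
  by split=> H t ht; move: (H t ht); rewrite (IHa i t (E' t ht)) (IHb i t (E' t ht)).
- exact: IHa.
- have {}IHa j := IHa j h E; have {}IHb j := IHb j h E.
  by setoid_rewrite IHa; setoid_rewrite IHb.
- have {}IHa j := IHa j h E; have {}IHb j := IHb j h E.
  by setoid_rewrite IHa; setoid_rewrite IHb.
Qed.

Lemma sat_same_there V W phi i :
  same_there V W -> sat V i true phi <-> sat W i true phi.
Proof. by move=> E; apply: sat_agree => j t p ht; rewrite (ht erefl). Qed.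

Lemma sat_persist V phi i : is_THT V -> sat V i false phi -> sat V i true phi.
Proof.
move=> HV.
elim: phi i => [p| |a IHa b IHb|a IHa b IHb|a IHa b IHb|a IHa|a IHa b IHb|a IHa b IHb]
  i /=.
- exact: HV.
- done.
- by case=> /IHa ? /IHb.
- by case=> [/IHa|/IHb]; [left|right].
- by move=> H t _; apply: H.
- exact: IHa.
- by case=> k [/IHb Hb Ha]; exists k; split=> // j /Ha /IHa.
- move=> H k; case: (H k) => [/IHb|[j [jk /IHa]]]; first by left.
  by right; exists j.
Qed.

Lemma sat_total V phi i : total_model V -> sat V i false phi <-> sat V i true phi.
Proof.
move=> Htot.
elim: phi i => [p| |a IHa b IHb|a IHa b IHb|a IHa b IHb|a IHa|a IHa b IHb|a IHa b IHb]
  i /=.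
- exact: Htot.
- done.
- by rewrite IHa IHb.
- by rewrite IHa IHb.
- split=> H t ht; first exact: H.
  case: t ht => ht; first exact: H.
  by move=> /IHa /(H true hle_true) /IHb.
- exact: IHa.
- by setoid_rewrite IHa; setoid_rewrite IHb.
- by setoid_rewrite IHa; setoid_rewrite IHb.
Qed.

Lemma sat_shift V phi i j h : sat (shift V i) j h phi <-> sat V (i + j) h phi.
Proof.
elim: phi j h => [p| |a IHa b IHb|a IHa b IHb|a IHa b IHb|a IHa|a IHa b IHb|a IHa b IHb]
  j h /=.
- done.
- done.
- by rewrite IHa IHb.
- by rewrite IHa IHb.
- by setoid_rewrite IHa; setoid_rewrite IHb.
- by rewrite IHa addnS.
- by setoid_rewrite IHa; setoid_rewrite IHb; setoid_rewrite addnA.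
- by setoid_rewrite IHa; setoid_rewrite IHb; setoid_rewrite addnA.
Qed.

Lemma sat_theory_shift V G i h :
  sat_theory V i h G -> sat_theory (shift V i) 0 h G.
Proof. by move=> HG g /HG; rewrite sat_shift addn0. Qed.

Lemma sat_nexts V n p i h : sat V i h (nexts n p) <-> V (i + n) h p.
Proof. by elim: n i => [|n IHn] i /=; rewrite ?addn0 // IHn addSnnS. Qed.

Lemma sat_Neg V phi i h :
  sat V i h (Neg phi) <-> forall t, hle h t -> ~ sat V i t phi.
Proof. by []. Qed.

Lemma Th_nexts V n p : Th V (nexts n p) <-> V n false p.
Proof. by rewrite /Th sat_nexts. Qed.

Lemma sat_extend_neg G V W h :
  is_THT W -> total_model V -> same_there W V ->
  sat_theory W 0 h G -> sat_theory W 0 h (extend_neg G V).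
Proof.
move=> HW Htot EWV HG g [/HG //|[psi [Hpsi ->]]] t _ Ht /=.
apply/Hpsi/sat_total/(sat_same_there _ _ EWV) => //.
by case: t Ht => // /sat_persist; apply.
Qed.

Lemma extend_neg_same_there G V W h :
  is_THT V -> sat_theory W 0 h (extend_neg G V) -> same_there W V.
Proof.
move=> HV HW n p; split=> Hp; apply: NNPP => Hn.
- have /HW/sat_Neg/(_ true hle_true) : extend_neg G V (Neg (nexts n p)).
    by right; exists (nexts n p); split; rewrite // Th_nexts => /HV.
  by rewrite sat_nexts.
- have /HW/sat_Neg/(_ true hle_true) : extend_neg G V (Neg (Neg (nexts n p))).
    by right; exists (Neg (nexts n p)); split=> //; rewrite /Th sat_Neg => /(_ true hle_true);
      rewrite sat_nexts.
  by apply; apply/sat_Neg => t /(_ erefl) ->; rewrite sat_nexts.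
Qed.

Lemma equilibrium_agree G V W h :
  temporal_equilibrium G V -> is_THT W -> sat_theory W 0 h (extend_neg G V) ->
  forall i t p, hle h t -> (W i t p <-> V i t p).
Proof.
case=> HV [Htot [_ Hmin]] HW HWG.
have EWV := extend_neg_same_there HV HWG.
case: h HWG => HWG i t p ht; first by rewrite (ht erefl).
have [EWV' | NEWV] := classic (forall j s q, W j s q <-> V j s q); first exact: EWV'.
have HleWV : leM W V by split=> // j q /HW /EWV /Htot.
case: Hmin; exists W; do !split=> //.
by move=> g Hg; apply: HWG; left.
Qed.

Lemma equilibrium_entails G V phi :
  temporal_equilibrium G V -> Th V phi -> tht_entails (extend_neg G V) phi.
Proof.
move=> HGV Hphi W HW i h /sat_theory_shift HWG.
have HWi : is_THT (shift W i) by move=> j p /HW.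
rewrite -[i]addn0 -sat_shift (sat_agree _ _ (equilibrium_agree HGV HWi HWG)).
by case: HGV => _ [Htot _]; case: h {HWG} => //; apply/sat_total.
Qed.

Lemma Th_entailed_minimal G V W :
  total_model V ->
  (forall phi, Th V phi -> tht_entails (extend_neg G V) phi) ->
  is_THT W -> leM W V -> sat_theory W 0 false G ->
  forall i h p, W i h p <-> V i h p.
Proof.
move=> Htot HTh HW [EWV WV] HWG i [] p; first exact: EWV.
split=> [/WV //|/Th_nexts /HTh Hp].
have HWneg := sat_extend_neg HW Htot EWV HWG.
by move: (Hp W HW 0 false HWneg); rewrite sat_nexts.
Qed.

End TemporalEquilibrium.

Theorem lemma5p2 (P : countType) (G : theory P) (V : valuation P) :
  is_THT V -> total_model V ->
  (temporal_equilibrium G V <->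
   (forall phi : formula P, tht_entails (extend_neg G V) phi <-> Th V phi)).
Proof.
move=> HV Htot; split=> [HGV phi | HTh].
- split=> [Hent | ]; last exact: equilibrium_entails.
  apply: (Hent V HV 0 false); case: HGV => _ [_ [HG _]].
  by apply: sat_extend_neg.
- have HG : sat_theory V 0 false G.
    by move=> g Hg; apply/HTh => W _ i h; apply; left.
  do 3!split=> //.
  case=> W [HW [HWV HWG]]; case: HWV => [HleWV []].
  exact: (Th_entailed_minimal Htot (fun phi => proj2 (HTh phi)) HW HleWV HWG).
Qed.
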